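(* Let $G$ be a connected nontrivial graph with $m$ vertices and let $n\geq2$. If $\min\{(3n-2)\lambda(G),\ m+2e(G)\}\geq \min\{2\xi(G)+4,\ 5\delta(G)+1\}$, then $G\boxtimes P_n$ is maximally restricted edge-connected, i.e. $\lambda'(G\boxtimes P_n)=\xi(G\boxtimes P_n)$.
   Context: All graphs are finite, simple and undirected; ''nontrivial'' means having at least two vertices. $P_n$ denotes the path on $n$ vertices. For a graph $G$: $e(G)=|E(G)|$; $\delta(G)$ is the minimum degree; $\lambda(G)$ is the edge-connectivity; for an edge $uv$, its edge-degree is $d_G(u)+d_G(v)-2$, and $\xi(G)$ is the minimum edge-degree over all edges of $G$. A restricted edge-cut of a connected graph $G$ is a set $S\subseteq E(G)$ such that $G-S$ is disconnected and every component of $G-S$ has at least $2$ vertices; $\lambda'(G)$ is the minimum cardinality of a restricted edge-cut. A graph $G$ is maximally restricted edge-connected if $\lambda'(G)=\xi(G)$. The strong product $G\boxtimes H$ has vertex set $V(G)\times V(H)$, with $(x_1,y_1)$ and $(x_2,y_2)$ adjacent iff either $x_1=x_2$ and $y_1y_2\in E(H)$, or $y_1=y_2$ and $x_1x_2\in E(G)$, or $x_1x_2\in E(G)$ and $y_1y_2\in E(H)$. (One has $\xi(G\boxtimes P_n)=\min\{2\xi(G)+4,5\delta(G)+1\}$.) *)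

From mathcomp Require Import all_boot.
Set Implicit Arguments. Unset Strict Implicit. Unset Printing Implicit Defensive.

Section Graphs.
Variable V : finType.
Implicit Types (g : rel V) (S : {set {set V}}).

Definition simple_graph g := symmetric g /\ irreflexive g.

Definition edges g : {set {set V}} :=
  [set [set x.1; x.2] | x : V * V & g x.1 x.2].

Definition num_edges g := #|edges g|.

Definition connected g := forall x y : V, connect g x y.

Definition nontrivial := 1 < #|V|.

Definition deg g (x : V) := #|[set y | g x y]|.

(* minimum degree delta(G) (default #|V| only when V is empty) *)
Definition min_deg g := \big[minn/#|V|]_(x : V) deg g x.

Definition min_edge_deg g :=
  \big[minn/(2 * #|V|)]_(p : V * V | g p.1 p.2) (deg g p.1 + deg g p.2 - 2).

Definition remove_edges g S : rel V :=
  fun x y => g x y && ([set x; y] \notin S).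

Definition edge_cut g S :=
  (S \subset edges g) && [exists x, exists y, ~~ connect (remove_edges g S) x y].

Definition restricted_edge_cut g S :=
  edge_cut g S &&
  [forall x, 2 <= #|[set y | connect (remove_edges g S) x y]|].

(* lambda(G): minimum cardinality of an edge-cut (default #|E(G)|, which is
   itself an edge-cut for a nontrivial graph) *)
Definition edge_conn g :=
  \big[minn/#|edges g|]_(S | edge_cut g S) #|S|.

(* lambda'(G): minimum cardinality of a restricted edge-cut
   (default #|E(G)| only if no restricted edge-cut exists) *)
Definition restr_edge_conn g :=
  \big[minn/#|edges g|]_(S | restricted_edge_cut g S) #|S|.

Definition max_restr_edge_conn g := restr_edge_conn g = min_edge_deg g.

End Graphs.

Definition path_graph (n : nat) : rel 'I_n :=
  fun i j => (i.+1 == j :> nat) || (j.+1 == i :> nat).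

Definition strong_prod (V W : finType) (g : rel V) (h : rel W) : rel (V * W) :=
  fun p q => [|| (p.1 == q.1) && h p.2 q.2,
                 (p.2 == q.2) && g p.1 q.1
               | g p.1 q.1 && h p.2 q.2].
Arguments path_graph n : clear implicits.

(* The edges leaving the two ends of an edge of minimum edge degree of
   H = G ⊠ P_n form a restricted edge cut, since every vertex of H has a
   neighbour outside any two given vertices; hence lambda'(H) <= xi(H).
   Conversely, a restricted edge cut contains the cut of a vertex set Z such
   that neither Z nor its complement has an isolated vertex, and we count
   this cut fibre by fibre, the fibre of v being {v} x P_n.  If one fibre lies
   in Z and another outside, the 3n - 2 pairs of equal or adjacent layers
   G x {i} each carry at least lambda(G) cut edges (by submodularity of the cut
   function of G), and (3n - 2) lambda(G) >= xi(H).  Otherwise, up to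
   complementing Z, every fibre meets the complement of Z, and counting the
   cut edges at the fibre of a vertex of Z and at the fibres of its
   neighbours gives at least xi(H). *)

From mathcomp Require Import all_boot order zify.
Set Implicit Arguments. Unset Strict Implicit. Unset Printing Implicit Defensive.

Section BigMinn.
Variables (I : finType) (P : pred I) (F : I -> nat) (d : nat).

Lemma bigminn_le_cond j : P j -> \big[minn/d]_(i | P i) F i <= F j.
Proof. by move=> Pj; rewrite -minEnat -leEnat; exact: Order.TotalTheory.bigmin_le_cond. Qed.

Lemma le_bigminn k :
  k <= d -> (forall i, P i -> k <= F i) -> k <= \big[minn/d]_(i | P i) F i.
Proof.
rewrite -minEnat -leEnat => kd kF.
by apply: Order.POrderTheory.le_bigmin => // i /kF; rewrite leEnat.
Qed.

Lemma eq_bigminn j : P j -> (forall i, P i -> F i <= d) ->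
  exists2 i, P i & \big[minn/d]_(i | P i) F i = F i.
Proof.
rewrite -minEnat => Pj Fd.
by have [i Pi ->] := Order.TotalTheory.eq_bigmin j P F Pj Fd; exists i.
Qed.

End BigMinn.

Lemma connect_neq_step (T : finType) (r : rel T) x y :
  connect r x y -> x != y -> exists z, r x z.
Proof.
move=> /connectP[[|z p] /= rp ->]; first by rewrite eqxx.
by case/andP: rp => rxz _ _; exists z.
Qed.

Lemma card_gt1_neq (T : finType) (A : {set T}) x :
  1 < #|A| -> exists2 y, y \in A & y != x.
Proof.
case/card_gt1P => [y [z [yA zA yz]]].
have [yx|] := eqVneq y x; last by exists y.
by exists z; rewrite // -yx eq_sym.
Qed.

Lemma irreflexive_neq (T : eqType) (e : rel T) x y : irreflexive e -> e x y -> x != y.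
Proof. by move=> eirr; apply: contraTneq => ->; rewrite eirr. Qed.

Lemma leq_term_sum (I : finType) (F : I -> nat) a : F a <= \sum_i F i.
Proof. by rewrite (bigD1 a) //= leq_addr. Qed.

Lemma leq_sum_pair (I : finType) (F : I -> nat) a b : a != b -> F a + F b <= \sum_i F i.
Proof. by move=> ab; rewrite (bigD1 a) //= leq_add2l (bigD1 b) 1?eq_sym //= leq_addr. Qed.

Lemma leq_sum2_pair (I : finType) (F : I -> I -> nat) a b : a != b ->
  F a a + F a b + (F b a + F b b) <= \sum_i \sum_j F i j.
Proof.
move=> ab; apply: leq_trans (leq_sum_pair (fun i => \sum_j F i j) ab).
exact: leq_add (leq_sum_pair _ ab) (leq_sum_pair _ ab).
Qed.

Lemma set2_third (T : finType) (a b c p q : T) : a != b -> a != c -> b != c ->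
  a \in [set p; q] -> b \in [set p; q] -> c \notin [set p; q].
Proof.
move=> ab ac bc /set2P aE /set2P bE; move: ab ac bc.
rewrite !inE negb_or ![c == _]eq_sym.
by case: aE bE => -> [] ->; rewrite ?eqxx // => _ -> ->.
Qed.

Section Cuts.
Variables (T : finType) (e : rel T).
Hypothesis esym : symmetric e.
Implicit Types (A B Z : {set T}) (S : {set {set T}}).

Definition cross_count A B := \sum_x \sum_y (e x y && ((x \in A) != (y \in B))).

Definition cut_count Z := cross_count Z Z.

Definition cut_edges Z : {set {set T}} :=
  [set [set x.1; x.2] | x : T * T & [&& e x.1 x.2, x.1 \in Z & x.2 \notin Z]].

Lemma card_cut_edges Z :
  #|cut_edges Z| = \sum_x \sum_y [&& e x y, x \in Z & y \notin Z].
Proof.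
rewrite card_in_imset; last first.
  move=> [x1 x2] [y1 y2]; rewrite !inE /= => /and3P[_ x1Z x2Z] /and3P[_ y1Z y2Z] E.
  have -> : x1 = y1.
    have /set2P[//|x1y2] : x1 \in [set y1; y2] by rewrite -E set21.
    by move: x1Z; rewrite x1y2 (negbTE y2Z).
  have /set2P[x2y1|-> //] : x2 \in [set y1; y2] by rewrite -E set22.
  by move: x2Z; rewrite x2y1 y1Z.
rewrite -sum1_card big_mkcond /= pair_bigA /=.
by apply: eq_bigr => x _; rewrite inE; case: ifP.
Qed.

Lemma cut_count_cut_edges Z : cut_count Z = 2 * #|cut_edges Z|.
Proof.
have -> : cut_count Z = \sum_x \sum_y [&& e x y, x \in Z & y \notin Z] +
                        \sum_x \sum_y [&& e x y, x \notin Z & y \in Z].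
  rewrite -big_split; apply: eq_bigr => x _; rewrite -big_split; apply: eq_bigr => y _.
  by case: (e x y); case: (x \in Z); case: (y \in Z).
rewrite card_cut_edges mul2n -addnn; congr (_ + _).
rewrite exchange_big; apply: eq_bigr => x _; apply: eq_bigr => y _.
by rewrite esym; case: (e x y); case: (x \in Z); case: (y \in Z).
Qed.

Lemma cut_countC Z : cut_count (~: Z) = cut_count Z.
Proof.
apply: eq_bigr => x _; apply: eq_bigr => y _.
by rewrite !inE; case: (x \in Z); case: (y \in Z).
Qed.

Lemma cut_edges_sub Z : cut_edges Z \subset edges e.
Proof.
apply/subsetP => s /imsetP[x]; rewrite inE => /and3P[exy _ _] ->.
by apply/imsetP; exists x; rewrite ?inE.
Qed.

Lemma mem_cut_edges Z x y :
  e x y -> (x \in Z) != (y \in Z) -> [set x; y] \in cut_edges Z.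
Proof.
move=> exy; case xZ: (x \in Z); case yZ: (y \in Z) => // _.
  by apply/imsetP; exists (x, y); rewrite // inE /= exy xZ yZ.
by apply/imsetP; exists (y, x); rewrite ?inE /= 1?esym ?exy ?xZ ?yZ // setUC.
Qed.

Lemma cut_edges_inner Z x y :
  (x \in Z) = (y \in Z) -> [set x; y] \notin cut_edges Z.
Proof.
move=> xyZ; apply/imsetP => -[[a b]]; rewrite inE /= => /and3P[_ aZ bZ] E.
have sameZ c : c \in [set x; y] -> (c \in Z) = (x \in Z).
  by case/set2P => ->.
have /sameZ aE : a \in [set x; y] by rewrite E set21.
have /sameZ bE : b \in [set x; y] by rewrite E set22.
by move: bZ; rewrite bE -aE aZ.
Qed.

Lemma connect_remove_cut_edges Z S x y : cut_edges Z \subset S ->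
  connect (remove_edges e S) x y -> (x \in Z) = (y \in Z).
Proof.
move=> ZS; apply: closed_connect => a b /andP[eab abS]; apply/eqP.
by apply: contraNT abS => abZ; apply: subsetP ZS _ (mem_cut_edges eab abZ).
Qed.

Lemma edge_conn_le_cut_edges Z x y :
  x \in Z -> y \notin Z -> edge_conn e <= #|cut_edges Z|.
Proof.
move=> xZ yZ; apply: bigminn_le_cond; rewrite /edge_cut cut_edges_sub /=.
apply/existsP; exists x; apply/existsP; exists y.
by apply: contra yZ => /(connect_remove_cut_edges (subxx _)) <-.
Qed.

Lemma cut_count_ge_edge_conn Z x y :
  x \in Z -> y \notin Z -> 2 * edge_conn e <= cut_count Z.
Proof.
by move=> xZ yZ; rewrite cut_count_cut_edges leq_mul2l (edge_conn_le_cut_edges xZ yZ).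
Qed.

Lemma cross_countC A B : cross_count A B = cross_count B A.
Proof.
rewrite /cross_count exchange_big; apply: eq_bigr => x _; apply: eq_bigr => y _.
by rewrite esym eq_sym.
Qed.

Lemma cut_count_submodular A B :
  cut_count (A :&: B) + cut_count (A :|: B) <= cross_count A B + cross_count B A.
Proof.
rewrite -!big_split; apply: leq_sum => x _; rewrite -!big_split; apply: leq_sum => y _.
rewrite !inE; case: (e x y) => //.
by case: (x \in A); case: (x \in B); case: (y \in A); case: (y \in B).
Qed.

Lemma cross_count_ge_edge_conn A B x y : x \in A :&: B -> y \notin A :|: B ->
  2 * edge_conn e <= cross_count A B.
Proof.
move=> xAB yAB.
have yI : y \notin A :&: B by apply: contra yAB; rewrite !inE => /andP[->].
have xU : x \in A :|: B by move: xAB; rewrite !inE => /andP[->].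
rewrite -(leq_pmul2l (_ : 0 < 2)) // [X in _ <= X]mul2n -addnn {2}cross_countC.
apply: leq_trans (cut_count_submodular A B); rewrite mul2n -addnn.
exact: leq_add (cut_count_ge_edge_conn xAB yI) (cut_count_ge_edge_conn xU yAB).
Qed.

End Cuts.

Section RestrictedCuts.
Variables (T : finType) (e : rel T).
Hypotheses (esym : symmetric e) (eirr : irreflexive e).
Implicit Types (Z : {set T}) (S : {set {set T}}).

Definition nonisolated_in Z := forall x, x \in Z -> exists2 y, e x y & y \in Z.

Lemma remove_edges_sym S : symmetric (remove_edges e S).
Proof. by move=> x y; rewrite /remove_edges esym setUC. Qed.

Lemma restricted_edge_cut_step S : restricted_edge_cut e S ->
  forall x, exists y, remove_edges e S x y.
Proof.
case/andP=> _ /forallP big_comps x.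
have [y] := card_gt1_neq x (big_comps x).
by rewrite inE eq_sym; exact: connect_neq_step.
Qed.

Lemma restricted_edge_cut_card_ge k :
  (forall Z x y, x \in Z -> y \notin Z -> nonisolated_in Z -> nonisolated_in (~: Z) ->
     2 * k <= cut_count e Z) ->
  forall S, restricted_edge_cut e S -> k <= #|S|.
Proof.
move=> cut_ge S rS; have step := restricted_edge_cut_step rS.
case/andP: rS => /andP[_ /existsP[x /existsP[y nxy]]] _.
set R := remove_edges e S; set X := [set z | connect R x z].
have XS : cut_edges e X \subset S.
  apply/subsetP => s /imsetP[[p q]]; rewrite !inE /= => /and3P[epq xp xq] ->.
  apply: contraR xq => pqS; apply: connect_trans xp (connect1 _).
  by rewrite /R /remove_edges epq pqS.
have: 2 * k <= cut_count e X.
  apply: (cut_ge X x y); rewrite ?inE ?connect0 //.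
    move=> p; rewrite inE => xp; have [z Rpz] := step p.
    by exists z; [case/andP: Rpz | rewrite inE (connect_trans xp (connect1 Rpz))].
  move=> p; rewrite !inE => xp; have [z Rpz] := step p.
  exists z; first by case/andP: Rpz.
  rewrite !inE; apply: contra xp => xz.
  by apply: connect_trans xz (connect1 _); rewrite /R remove_edges_sym.
rewrite (cut_count_cut_edges esym) leq_mul2l /= => /leq_trans; apply.
exact: subset_leq_card.
Qed.

Lemma cut_edges_restricted Z x y : x \in Z -> y \notin Z ->
  nonisolated_in Z -> nonisolated_in (~: Z) -> restricted_edge_cut e (cut_edges e Z).
Proof.
move=> xZ yZ nZ nCZ; rewrite /restricted_edge_cut /edge_cut cut_edges_sub //=.
apply/andP; split.
  apply/existsP; exists x; apply/existsP; exists y.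
  by apply: contra yZ => /(connect_remove_cut_edges esym (subxx _)) <-.
apply/forallP => v.
have [u evu vuZ] : exists2 u, e v u & (v \in Z) = (u \in Z).
  case vZ: (v \in Z); first by have [u evu uZ] := nZ v vZ; exists u; rewrite ?uZ.
  have [|u evu] := nCZ v; first by rewrite inE vZ.
  by rewrite inE => /negbTE uZ; exists u; rewrite ?uZ.
have vu := irreflexive_neq eirr evu.
apply: (@leq_trans #|[set v; u]|); first by rewrite cards2 vu.
apply: subset_leq_card; apply/subsetP => w.
move=> /set2P[->|->]; rewrite inE; first exact: connect0.
by apply: connect1; rewrite /remove_edges evu cut_edges_inner.
Qed.

Lemma restr_edge_connE k :
  (exists2 S, restricted_edge_cut e S & #|S| <= k) ->
  (forall S, restricted_edge_cut e S -> k <= #|S|) -> restr_edge_conn e = k.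
Proof.
move=> [S rS Sk] kS; apply/eqP; rewrite eqn_leq (leq_trans (bigminn_le_cond _ _ rS) Sk) /=.
have Sedges : #|S| <= #|edges e| by apply/subset_leq_card; case/andP: rS => /andP[].
exact: (le_bigminn (leq_trans (kS _ rS) Sedges) kS).
Qed.

End RestrictedCuts.

Section Degrees.
Variables (T : finType) (e : rel T).

Lemma deg_sum v : deg e v = \sum_w e v w.
Proof.
by rewrite /deg -sum1_card big_mkcond; apply: eq_bigr => w _; rewrite inE; case: (e v w).
Qed.

Lemma deg_gt0 v w : e v w -> 0 < deg e v.
Proof. by move=> evw; rewrite /deg card_gt0; apply/set0Pn; exists w; rewrite inE. Qed.

Lemma sum_adj_neq p q : e p q -> \sum_w (e p w && (w != q)) = deg e p - 1.
Proof.
move=> epq; rewrite -big_mkcond sum1_card /deg (cardsD1 q) inE epq add1n subn1 /=.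
by apply: eq_card => w; rewrite !inE andbC.
Qed.

Lemma min_edge_deg_le p q : e p q -> min_edge_deg e <= deg e p + deg e q - 2.
Proof. exact: (@bigminn_le_cond _ (fun p : T * T => e p.1 p.2) _ _ (p, q)). Qed.

Lemma min_edge_deg_attained x y : e x y ->
  exists2 p : T * T, e p.1 p.2 & min_edge_deg e = deg e p.1 + deg e p.2 - 2.
Proof.
move=> exy; apply: (eq_bigminn (j := (x, y))) => // p _.
by rewrite mul2n -addnn (leq_trans (leq_subr _ _)) // leq_add ?max_card.
Qed.

Lemma min_deg_attained (x : T) : exists u, min_deg e = deg e u.
Proof.
have [u _ E] := @eq_bigminn _ predT (deg e) #|T| x isT (fun u _ => max_card _).
by exists u; exact: E.
Qed.

Lemma connected_adj : connected e -> nontrivial T -> forall v, exists w, e v w.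
Proof.
move=> conn ntT v; have /(card_gt1_neq v)[w _ wv] : 1 < #|[set: T]| by rewrite cardsT.
by apply: connect_neq_step (conn v w) _; rewrite eq_sym.
Qed.

Lemma connected_edge : connected e -> nontrivial T -> exists x y, e x y.
Proof.
move=> conn ntT; have [x _] : exists x : T, x \in T by apply/card_gt0P; rewrite (ltnW ntT).
by have [y exy] := connected_adj conn ntT x; exists x, y.
Qed.

Hypotheses (esym : symmetric e) (eirr : irreflexive e).

Lemma sum_closed_nbhd v : \sum_w ((v == w) || e v w) = (deg e v).+1.
Proof.
rewrite deg_sum (bigD1 v) //= eqxx add1n [in RHS](bigD1 v) //= eirr add0n.
by congr _.+1; apply: eq_bigr => w wv; rewrite eq_sym (negbTE wv).
Qed.

Lemma card_cut_edges_pair p q : e p q ->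
  #|cut_edges e [set p; q]| <= deg e p + deg e q - 2.
Proof.
move=> epq; have pq := irreflexive_neq eirr epq.
have eqp : e q p by rewrite esym.
have -> : deg e p + deg e q - 2 = (deg e p - 1) + (deg e q - 1).
  by have := deg_gt0 epq; have := deg_gt0 eqp; lia.
rewrite card_cut_edges (bigD1 p) //= [X in _ + X](bigD1 q) 1?eq_sym //=.
rewrite [X in _ + (_ + X)]big1 ?addn0 => [|x /andP[xp xq]]; last first.
  by apply: big1 => y _; rewrite !inE (negbTE xp) (negbTE xq) andbF.
rewrite -(sum_adj_neq epq) -(sum_adj_neq eqp); apply: leq_add; apply: leq_sum => y _;
  by rewrite !inE !eqxx ?orbT negb_or; case: (y == p); case: (y == q); rewrite ?andbF.
Qed.

Lemma restricted_edge_cut_min_edge_deg x y : e x y -> 2 < #|T| ->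
  (forall p q, e p q -> nonisolated_in e (~: [set p; q])) ->
  exists2 S, restricted_edge_cut e S & #|S| <= min_edge_deg e.
Proof.
move=> exy T3 nC; have [[p q] /= epq ->] := min_edge_deg_attained exy.
have [r] : exists r, r \in ~: [set p; q].
  apply/set0Pn; rewrite -card_gt0 -(leq_add2l #|[set p; q]|) cardsC addn1.
  by apply: leq_ltn_trans T3; rewrite cards2; case: (p != q).
rewrite inE => rpq.
have nW : nonisolated_in e [set p; q].
  by move=> z /set2P[]->; [exists q | exists p]; rewrite ?set21 ?set22 // esym.
exists (cut_edges e [set p; q]); last exact: card_cut_edges_pair.
exact: (cut_edges_restricted esym eirr (set21 p q) rpq nW (nC p q epq)).
Qed.

End Degrees.

Lemma sum_ord_eq n m : \sum_(j < n) (j == m :> nat) = (m < n).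
Proof.
elim: n => [|n IH]; first by rewrite big_ord0.
by rewrite big_ord_recr /= IH ltnS (leq_eqVlt m n) (eq_sym n m); case: ltngtP.
Qed.

Lemma sum_ord_gt0 n : \sum_(i < n) (0 < i) = n.-1.
Proof.
elim: n => [|n IH]; first by rewrite big_ord0.
by rewrite big_ord_recr /= IH; case: n {IH} => //= n; rewrite addn1.
Qed.

Lemma sum_ord_succ_lt n : \sum_(i < n) (i.+1 < n) = n.-1.
Proof.
case: n => [|n]; first by rewrite big_ord0.
rewrite big_ord_recr /= ltnn addn0 (eq_bigr (fun _ => 1)) => [|i _];
  last by rewrite ltnS ltn_ord.
by rewrite sum_nat_const card_ord muln1.
Qed.

Section PathGraph.
Variable n : nat.
Implicit Types i j k : 'I_n.

Lemma path_graph_sym : symmetric (path_graph n).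
Proof. by move=> i j; rewrite /path_graph orbC. Qed.

Lemma path_graph_irr : irreflexive (path_graph n).
Proof. by move=> i; rewrite /path_graph orbb eqn_leq ltnn. Qed.

Lemma path_graph_neq i j : path_graph n i j -> i != j.
Proof. exact/irreflexive_neq/path_graph_irr. Qed.

Lemma path_graph_const (b : 'I_n -> bool) :
  (forall k k', path_graph n k k' -> b k = b k') -> forall i j, b i = b j.
Proof.
move=> bE; suff b0 (m : nat) (hm : m < n) (h0 : 0 < n) : b (Ordinal hm) = b (Ordinal h0).
  by move=> [i hi] [j hj]; rewrite !(b0 _ _ (leq_ltn_trans (leq0n i) hi)).
elim: m hm => [|m IH] hm; first by congr b; apply: val_inj.
by rewrite -(IH (ltnW hm)); apply/esym/bE; rewrite /path_graph /= eqxx.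
Qed.

Lemma path_graph_boundary (b : 'I_n -> bool) i j : b i != b j ->
  exists k k', path_graph n k k' && (b k != b k').
Proof.
move=> bij.
suff /existsP[k /existsP[k' kk']] : [exists k, exists k', path_graph n k k' && (b k != b k')].
  by exists k, k'.
apply: contraNT bij => /existsPn noboundary; apply/eqP/path_graph_const => k k' kk'.
by apply/eqP; have /existsPn/(_ k') := noboundary k; rewrite kk' negbK.
Qed.

Definition closed_adj i j := (i == j) || path_graph n i j.

Definition closed_deg i := #|[set j | closed_adj i j]|.

Lemma sum_closed_adj i : \sum_j closed_adj i j = closed_deg i.
Proof.
by rewrite /closed_deg -sum1_card [RHS]big_mkcond; apply: eq_bigr => j _; rewrite inE.
Qed.

Lemma closed_degE i : closed_deg i = 1 + (0 < i) + (i.+1 < n).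
Proof.
rewrite -sum_closed_adj.
have adjE j : closed_adj i j =
    (j == i :> nat) + (j == i.-1 :> nat) * (0 < i) + (j == i.+1 :> nat) :> nat
  by rewrite /closed_adj /path_graph -val_eqE /=; lia.
rewrite (eq_bigr _ (fun j _ => adjE j)) !big_split -big_distrl /= !sum_ord_eq ltn_ord.
by rewrite (leq_ltn_trans (leq_pred i) (ltn_ord i)) mul1n.
Qed.

Lemma sum_closed_deg : \sum_i closed_deg i = 3 * n - 2.
Proof.
rewrite (eq_bigr _ (fun i _ => closed_degE i)) !big_split /= sum_ord_gt0 sum_ord_succ_lt.
by rewrite sum_nat_const card_ord muln1; lia.
Qed.

Hypothesis n_gt1 : 1 < n.

Lemma path_graph_adj k : exists k', path_graph n k k'.
Proof.
have [kn|] := ltnP k.+1 n; first by exists (Ordinal kn); rewrite /path_graph /= eqxx.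
case: k => [[|k] kn] //= kn'; first by move: n_gt1; rewrite ltnNge kn'.
by exists (Ordinal (ltnW kn)); rewrite /path_graph /= eqxx orbT.
Qed.

Definition path_start : 'I_n := Ordinal (ltnW n_gt1).
Definition path_next : 'I_n := Ordinal n_gt1.

Lemma path_graph_start : path_graph n path_start path_next.
Proof. by []. Qed.

Lemma closed_deg_start : closed_deg path_start = 2.
Proof. by rewrite closed_degE /= n_gt1. Qed.

Lemma closed_deg_next : closed_deg path_next = 2 + (2 < n).
Proof. by rewrite closed_degE. Qed.

End PathGraph.

Section StrongPathProduct.
Variables (V : finType) (g : rel V).
Hypotheses (gsym : symmetric g) (girr : irreflexive g).
Variable n : nat.

Local Notation H := (strong_prod g (path_graph n)).
Implicit Types (Z : {set V * 'I_n}) (v w : V) (i j k : 'I_n).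

Lemma strong_pathE v i w j :
  H (v, i) (w, j) = if v == w then path_graph n i j else g v w && closed_adj i j.
Proof.
rewrite /strong_prod /closed_adj /=; have [<-|vw] /= := eqVneq v w.
  by rewrite girr andbF !orbF.
by rewrite andbC andb_orr.
Qed.

Lemma strong_path_sym : symmetric H.
Proof.
move=> [v i] [w j]; rewrite !strong_pathE eq_sym; case: (w == v); first exact: path_graph_sym.
by rewrite gsym /closed_adj path_graph_sym eq_sym.
Qed.

Lemma strong_path_irr : irreflexive H.
Proof. by move=> [v i]; rewrite strong_pathE eqxx path_graph_irr. Qed.

Lemma strong_path_fibre v i j : path_graph n i j -> H (v, i) (v, j).
Proof. by rewrite strong_pathE eqxx. Qed.

Lemma strong_path_layer v w i : g v w -> H (v, i) (w, i).
Proof.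
by move=> gvw; rewrite strong_pathE (negbTE (irreflexive_neq girr gvw)) gvw /closed_adj eqxx.
Qed.

Lemma deg_strong_path v i : deg H (v, i) = (deg g v).+1 * closed_deg i - 1.
Proof.
rewrite /deg; set A := setX (v |: [set w | g v w]) [set j | closed_adj i j].
have -> : [set y | H (v, i) y] = A :\ (v, i).
  apply/setP => -[w j]; rewrite !inE strong_pathE /= xpair_eqE.
  have [<-|vw] //= := eqVneq v w; rewrite /closed_adj.
  by have [->|] //= := eqVneq j i; rewrite path_graph_irr.
have vA : (v, i) \in A by rewrite !inE eqxx /closed_adj eqxx.
have := cardsD1 (v, i) A; rewrite vA cardsX cardsU1 inE girr add1n /closed_deg => ->.
by rewrite add1n subn1.
Qed.

(* The fibre of [v] is {v} x P_n and the layer of [i] is G x {i}; [fibre_cut]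
   and [layer_cut] count the ordered pairs of the cut of [Z] between two fibres,
   resp. two layers. *)
Definition cut_pair Z (x y : V * 'I_n) : nat := H x y && ((x \in Z) != (y \in Z)).

Definition fibre_cut Z v w := \sum_i \sum_j cut_pair Z (v, i) (w, j).

Definition fibre_cut_out Z v := \sum_w fibre_cut Z v w.

Definition layer_cut Z i j := \sum_v \sum_w cut_pair Z (v, i) (w, j).

Definition layer Z i := [set v | (v, i) \in Z].

Lemma sum_strong_path (F : V * 'I_n -> nat) : \sum_x F x = \sum_v \sum_i F (v, i).
Proof. by rewrite pair_bigA; apply: eq_bigr => -[]. Qed.

Lemma cut_count_fibres Z : cut_count H Z = \sum_v fibre_cut_out Z v.
Proof.
rewrite /cut_count /cross_count sum_strong_path; apply: eq_bigr => v _.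
rewrite /fibre_cut_out /fibre_cut [RHS]exchange_big; apply: eq_bigr => i _.
exact: sum_strong_path.
Qed.

Lemma cut_count_layers Z : cut_count H Z = \sum_i \sum_j layer_cut Z i j.
Proof.
rewrite cut_count_fibres /fibre_cut_out /fibre_cut.
under eq_bigr => v _ do rewrite exchange_big.
rewrite exchange_big; apply: eq_bigr => i _.
under eq_bigr => v _ do rewrite exchange_big.
by rewrite exchange_big.
Qed.

Lemma fibre_cutC Z v w : fibre_cut Z v w = fibre_cut Z w v.
Proof.
rewrite /fibre_cut exchange_big; apply: eq_bigr => i _; apply: eq_bigr => j _.
by rewrite /cut_pair strong_path_sym eq_sym.
Qed.

Lemma layer_cut_ge Z i j :
  closed_adj i j -> cross_count g (layer Z i) (layer Z j) <= layer_cut Z i j.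
Proof.
move=> ij; apply: leq_sum => v _; apply: leq_sum => w _.
rewrite /cut_pair strong_pathE !inE ij andbT.
by have [->|] := eqVneq v w; rewrite ?girr.
Qed.

(* Each of the 3n - 2 ordered pairs of equal or adjacent layers contributes
   2 lambda(G), by submodularity when the layers differ. *)
Lemma cut_count_separated_fibres Z u w :
  (forall k, (u, k) \in Z) -> (forall k, (w, k) \notin Z) ->
  2 * ((3 * n - 2) * edge_conn g) <= cut_count H Z.
Proof.
move=> uZ wZ; rewrite cut_count_layers -sum_closed_deg mulnCA big_distrl /=.
apply: leq_sum => i _; rewrite -sum_closed_adj big_distrl /=; apply: leq_sum => j _.
case ij: (closed_adj i j); rewrite ?mul0n // mul1n.
apply: leq_trans (layer_cut_ge _ ij).
by apply: (cross_count_ge_edge_conn gsym (x := u) (y := w)); rewrite !inE ?uZ ?(negbTE (wZ _)).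
Qed.

(* An edge kk' of P_n on which the fibre of [v] leaves [Z] makes two of the four
   pairs between {(v,k), (v,k')} and {(w,k), (w,k')} cut pairs. *)
Lemma fibre_cut_ge2 Z v w i i' : (v == w) || g v w ->
  (v, i) \in Z -> (v, i') \notin Z -> 2 <= fibre_cut Z v w.
Proof.
move=> vw vi vi'.
have [k [k' /andP[kk' Zkk']]] :
    exists k k', path_graph n k k' && (((v, k) \in Z) != ((v, k') \in Z)).
  by apply: (@path_graph_boundary _ (fun k => (v, k) \in Z) i i'); rewrite vi (negbTE vi').
apply: leq_trans (leq_sum2_pair (fun k l => cut_pair Z (v, k) (w, l)) (path_graph_neq kk')).
rewrite /cut_pair !strong_pathE /closed_adj kk' (path_graph_sym k' k) kk' !eqxx !orbT.
move: Zkk'; case/orP: vw => [/eqP <-|gvw]; rewrite ?eqxx ?path_graph_irr.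
  by case: ((v, k) \in Z); case: ((v, k') \in Z).
rewrite (negbTE (irreflexive_neq girr gvw)) gvw /=.
by case: ((v, k) \in Z); case: ((v, k') \in Z); case: ((w, k) \in Z); case: ((w, k') \in Z).
Qed.

Lemma fibre_cut_empty_nbr Z v w i j : g v w -> (forall k, (w, k) \notin Z) ->
  (v, i) \in Z -> (v, j) \in Z -> i != j -> closed_deg i + closed_deg j <= fibre_cut Z v w.
Proof.
move=> gvw wZ vi vj ij.
apply: leq_trans (leq_sum_pair (fun k => \sum_l cut_pair Z (v, k) (w, l)) ij).
have cutE k l : (v, k) \in Z -> cut_pair Z (v, k) (w, l) = closed_adj k l.
  move=> vk; rewrite /cut_pair strong_pathE (negbTE (irreflexive_neq girr gvw)) gvw.
  by rewrite vk (negbTE (wZ l)) andbT.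
rewrite (eq_bigr _ (fun l _ => cutE i l vi)) (eq_bigr _ (fun l _ => cutE j l vj)).
by rewrite !sum_closed_adj.
Qed.

Lemma fibre_cut_out_ge Z v i i' : (v, i) \in Z -> (v, i') \notin Z ->
  2 + 2 * deg g v <= fibre_cut_out Z v.
Proof.
move=> vi vi'; rewrite -mulnS -(sum_closed_nbhd girr v) big_distrr /=.
apply: leq_sum => w _; case vw: (_ || _); rewrite ?muln0 // muln1.
exact: fibre_cut_ge2 vw vi vi'.
Qed.

Lemma fibre_cut_nbrs_ge Z a b i i' : g a b -> (a, i) \in Z -> (a, i') \notin Z ->
  2 * (deg g a - 1) <= \sum_(v | (v != a) && (v != b)) fibre_cut Z v a.
Proof.
move=> gab ai ai'; have ba : b != a by rewrite eq_sym (irreflexive_neq girr gab).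
rewrite -(sum_adj_neq gab) big_distrr /= (bigD1 a) //= girr muln0 add0n.
rewrite (bigD1 b) //= eqxx andbF muln0 add0n; apply: leq_sum => v /andP[va vb].
case gav: (g a v); rewrite ?muln0 //= vb muln1 fibre_cutC.
by apply: fibre_cut_ge2 ai ai'; rewrite gav orbT.
Qed.

Lemma cut_count_adjacent_fibres Z a b ia ia' ib ib' : g a b ->
  (a, ia) \in Z -> (a, ia') \notin Z -> (b, ib) \in Z -> (b, ib') \notin Z ->
  4 * (deg g a + deg g b) <= cut_count H Z.
Proof.
move=> gab ai ai' bi bi'; have gba : g b a by rewrite gsym.
have ab := irreflexive_neq girr gab; have ba := irreflexive_neq girr gba.
have Na := fibre_cut_nbrs_ge gab ai ai'.
have Nb : 2 * (deg g b - 1) <= \sum_(v | (v != a) && (v != b)) fibre_cut Z v b.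
  by rewrite (eq_bigl _ _ (fun v => andbC _ _)); exact: fibre_cut_nbrs_ge gba bi bi'.
have Ra := fibre_cut_out_ge ai ai'; have Rb := fibre_cut_out_ge bi bi'.
have := deg_gt0 gab; have := deg_gt0 gba.
rewrite cut_count_fibres (bigD1 a) //= (bigD1 b) //= addnA.
have : \sum_(v | (v != a) && (v != b)) (fibre_cut Z v a + fibre_cut Z v b) <=
       \sum_(v | (v != a) && (v != b)) fibre_cut_out Z v.
  by apply: leq_sum => v _; exact: leq_sum_pair ab.
rewrite big_split /=; lia.
Qed.

Lemma fibre_cut_nbrs_empty Z a i j : (forall c, g a c -> forall k, (c, k) \notin Z) ->
  (a, i) \in Z -> (a, j) \in Z -> i != j ->
  deg g a * (closed_deg i + closed_deg j) <= \sum_(w | w != a) fibre_cut Z a w.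
Proof.
move=> out ai aj ij; rewrite deg_sum big_distrl /= (bigD1 a) //= girr mul0n add0n.
apply: leq_sum => w _; case gaw: (g a w); rewrite ?mul0n // mul1n.
exact: fibre_cut_empty_nbr gaw (out w gaw) ai aj ij.
Qed.

Lemma cut_count_isolated_fibre Z a i j i' : path_graph n i j ->
  (a, i) \in Z -> (a, j) \in Z -> (a, i') \notin Z ->
  (forall c, g a c -> forall k, (c, k) \notin Z) ->
  2 + 2 * (deg g a * (closed_deg i + closed_deg j)) <= cut_count H Z.
Proof.
move=> ij ai aj ai' out; have nbrs := fibre_cut_nbrs_empty out ai aj (path_graph_neq ij).
rewrite cut_count_fibres (bigD1 a) //= mul2n -addnn addnA; apply: leq_add.
  rewrite /fibre_cut_out (bigD1 a) //=; apply: leq_add nbrs.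
  by apply: fibre_cut_ge2 ai ai'; rewrite eqxx.
apply: (leq_trans nbrs); apply: leq_sum => v _; rewrite fibre_cutC.
exact: leq_term_sum.
Qed.

Hypothesis n_gt1 : 1 < n.
Local Notation i0 := (path_start n_gt1).

Lemma closed_deg_path i j : path_graph n i j -> 4 + (2 < n) <= closed_deg i + closed_deg j.
Proof. by rewrite !closed_degE /path_graph; have := ltn_ord i; have := ltn_ord j; lia. Qed.

(* Either a neighbouring fibre of [a] meets [Z], or the neighbour of [(a, i)] in
   [Z] lies in the fibre of [a], which is then surrounded by fibres outside [Z]. *)
Lemma cut_count_partial_fibres Z a i : (a, i) \in Z -> nonisolated_in H Z ->
  (forall v, exists j, (v, j) \notin Z) -> 2 * min_edge_deg H <= cut_count H Z.
Proof.
move=> ai nZ nCZ; have [i' ai'] := nCZ a.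
have [/existsP[c /andP[gac /existsP[k ck]]]|none] :=
  boolP [exists c, g a c && [exists k, (c, k) \in Z]].
  have [k' ck'] := nCZ c; have gca : g c a by rewrite gsym.
  apply: leq_trans (cut_count_adjacent_fibres gac ai ai' ck ck').
  have := min_edge_deg_le (strong_path_layer i0 gac).
  by rewrite !deg_strong_path closed_deg_start; have := deg_gt0 gac; have := deg_gt0 gca; lia.
have out c : g a c -> forall k, (c, k) \notin Z.
  move=> gac k; apply: contraNN none => ck.
  by apply/existsP; exists c; rewrite gac; apply/existsP; exists k.
have [[b j] /= Hab bj] := nZ _ ai.
have [ab|ab] := eqVneq a b; last first.
  by move: Hab; rewrite strong_pathE (negbTE ab) => /andP[/out/(_ j)]; rewrite bj.
move: Hab bj; rewrite -ab strong_pathE eqxx => ij aj.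
apply: leq_trans (cut_count_isolated_fibre ij ai aj ai' out).
have := leq_mul (leqnn (deg g a)) (closed_deg_path ij).
have := min_edge_deg_le (strong_path_fibre a (path_graph_start n_gt1)).
by rewrite !deg_strong_path closed_deg_start closed_deg_next; case: (2 < n); lia.
Qed.

Lemma cut_count_ge_min_edge_deg Z x y :
  min_edge_deg H <= (3 * n - 2) * edge_conn g ->
  x \in Z -> y \notin Z -> nonisolated_in H Z -> nonisolated_in H (~: Z) ->
  2 * min_edge_deg H <= cut_count H Z.
Proof.
move=> xi_le xZ yZ nZ nCZ; case: x xZ => a i ai.
have [/forallP partZ|] := boolP [forall v, [exists j, (v, j) \notin Z]].
  by apply: cut_count_partial_fibres ai nZ _ => v; apply/existsP/partZ.
rewrite negb_forall => /existsP[u /existsPn uZ].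
have [/forallP partCZ|] := boolP [forall v, [exists j, (v, j) \in Z]].
  rewrite -cut_countC; case: y yZ => b j bj.
  apply: (@cut_count_partial_fibres _ b j) nCZ _; first by rewrite inE.
  by move=> v; have /existsP[k vk] := partCZ v; exists k; rewrite inE negbK.
rewrite negb_forall => /existsP[w /existsPn wZ].
apply: leq_trans (cut_count_separated_fibres (u := u) (w := w) _ _).
- by rewrite leq_mul2l xi_le orbT.
- by move=> k; have := uZ k; rewrite negbK.
- exact: wZ.
Qed.

Lemma strong_path_nonisolated_off_pair p q : (forall v, exists w, g v w) ->
  nonisolated_in H (~: [set p; q]).
Proof.
move=> gadj [v i] _; have [w gvw] := gadj v; have [k ik] := path_graph_adj n_gt1 i.
have vw := irreflexive_neq girr gvw.
have Hvw : H (v, i) (w, k) by rewrite strong_pathE (negbTE vw) gvw /closed_adj ik orbT.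
have [vk|vk] := boolP ((v, k) \in [set p; q]); last first.
  by exists (v, k); [exact: strong_path_fibre | rewrite in_setC].
have [wi|wi] := boolP ((w, i) \in [set p; q]); last first.
  by exists (w, i); [exact: strong_path_layer | rewrite in_setC].
exists (w, k); rewrite // in_setC; apply: set2_third vk wi;
  by rewrite xpair_eqE ?(negbTE vw) // eqxx (negbTE (path_graph_neq ik)).
Qed.

Lemma min_edge_deg_strong_path_le v w : g v w ->
  min_edge_deg H <= minn (2 * min_edge_deg g + 4) (5 * min_deg g + 1).
Proof.
move=> gvw; rewrite leq_min; apply/andP; split.
  have [[a b] /= gab ->] := min_edge_deg_attained gvw; have gba : g b a by rewrite gsym.
  have := min_edge_deg_le (strong_path_layer i0 gab).
  by rewrite !deg_strong_path closed_deg_start; have := deg_gt0 gab; have := deg_gt0 gba; lia.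
have [u ->] := min_deg_attained g v.
have := min_edge_deg_le (strong_path_fibre u (path_graph_start n_gt1)).
by rewrite !deg_strong_path closed_deg_start closed_deg_next; case: (2 < n); lia.
Qed.

Lemma restr_edge_conn_strong_path : connected g -> nontrivial V ->
  min_edge_deg H <= (3 * n - 2) * edge_conn g -> restr_edge_conn H = min_edge_deg H.
Proof.
move=> conn ntV xi_le; have gadj := connected_adj conn ntV.
have [v [w gvw]] := connected_edge conn ntV.
have card_gt2 : 2 < #|{: V * 'I_n}|.
  by rewrite card_prod card_ord (leq_trans _ (leq_mul ntV n_gt1)).
apply: restr_edge_connE.
  exact: (restricted_edge_cut_min_edge_deg strong_path_sym strong_path_irr
    (strong_path_layer i0 gvw) card_gt2 (fun p q _ => strong_path_nonisolated_off_pair gadj)).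
apply: (restricted_edge_cut_card_ge strong_path_sym) => Z x y xZ yZ nZ nCZ.
exact: cut_count_ge_min_edge_deg xi_le xZ yZ nZ nCZ.
Qed.

End StrongPathProduct.

Theorem corollary3p2 (V : finType) (g : rel V) (n : nat) :
  simple_graph g -> connected g -> nontrivial V -> 2 <= n ->
  minn ((3 * n - 2) * edge_conn g) (#|V| + 2 * num_edges g)
    >= minn (2 * min_edge_deg g + 4) (5 * min_deg g + 1) ->
  max_restr_edge_conn (strong_prod g (path_graph n)).
Proof.
move=> [gsym girr] conn ntV n_gt1 hyp; have [v [w gvw]] := connected_edge conn ntV.
apply: restr_edge_conn_strong_path => //.
apply: leq_trans (min_edge_deg_strong_path_le gsym girr n_gt1 gvw) _.
exact: leq_trans hyp (geq_minl _ _).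
Qed.
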